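(* A class $\mathcal{C}$ of graphs has tree rank at most $2$ if and only if it has locally almost bounded degree.
   Context: $T_{d,m}$ is the rooted tree of depth $d$ (all leaf-to-root paths have $d$ edges) in which every non-leaf vertex has exactly $m$ children. $H$ is an $r$-shallow topological minor of $G$ if $G$ has a subgraph isomorphic to a graph obtained from $H$ by replacing each edge by a path with at most $r$ internal vertices (paths internally disjoint). A class has tree rank at most $d$ if for every $r\in\mathbb{N}$ there is $m\in\mathbb{N}$ such that no graph of the class contains $T_{d,m}$ as an $r$-shallow topological minor. $N_r^G(v)$ is the closed $r$-neighborhood of $v$ (vertices at distance at most $r$ from $v$, including $v$). A class $\mathcal{C}$ has locally almost bounded degree if there exist functions $f,d:\mathbb{N}\to\mathbb{N}$ such that for every $r\in\mathbb{N}$, every $G\in\mathcal{C}$ and every $v\in V(G)$, the set $N_r^G(v)$ contains at most $f(r)$ vertices whose degree in $G$ is larger than $d(r)$. *)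

From mathcomp Require Import all_boot.
Set Implicit Arguments. Unset Strict Implicit. Unset Printing Implicit Defensive.

Record graph := Graph {
  vt :> finType;
  gadj : rel vt;
  gadj_sym : symmetric gadj;
  gadj_irr : irreflexive gadj }.

Definition graph_class := graph -> Prop.

Definition deg (G : graph) (v : G) : nat := #|[set w | gadj v w]|.

Fixpoint ball (G : graph) (r : nat) (v : G) : {set G} :=
  match r with
  | 0 => [set v]
  | k.+1 => ball k v :|: [set w | [exists x in ball k v, gadj x w]]
  end.

(* r-shallow topological minor: an injective branch map f and, for every edge
   uv of H, a path in G from f u to f v whose internal vertices p u v
   (at most r of them) are distinct, avoid the branch vertices, and are
   disjoint from the internal vertices of the paths of all other edges. *)
Definition shallow_topminor (r : nat) (H G : graph) : Prop :=
  exists (f : H -> G) (p : H -> H -> seq G),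
    injective f /\
    (forall u v, gadj u v ->
       [/\ path (@gadj G) (f u) (rcons (p u v) (f v)),
           uniq (p u v), size (p u v) <= r &
           forall x, x \in p u v -> x \notin codom f]) /\
    (forall u v u' v', gadj u v -> gadj u' v' -> [set u; v] != [set u'; v'] ->
       forall x, x \in p u v -> x \notin p u' v').

(* The rooted tree T_{d,m}: vertices are words over 'I_m of length <= d
   (the root is the empty word); a word of length k is joined to its
   extensions by one letter. *)
Definition tvert (d m : nat) := {k : 'I_d.+1 & k.-tuple 'I_m}.

Definition tchild (d m : nat) (x y : tvert d m) : bool :=
  (tag y == (tag x).+1 :> nat) && (val (tagged x) == take (tag x) (val (tagged y))).

Definition tadj (d m : nat) : rel (tvert d m) :=
  fun x y => tchild x y || tchild y x.

Lemma tadj_sym d m : symmetric (@tadj d m).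
Proof. by move=> x y; rewrite /tadj orbC. Qed.

Lemma tadj_irr d m : irreflexive (@tadj d m).
Proof. by move=> x; rewrite /tadj orbb /tchild (ltn_eqF (ltnSn _)). Qed.

Definition tree (d m : nat) : graph := Graph (@tadj_sym d m) (@tadj_irr d m).

Definition tree_rank_le (C : graph_class) (d : nat) : Prop :=
  forall r : nat, exists m : nat, forall G : graph, C G -> ~ shallow_topminor r (tree d m) G.

Definition locally_almost_bounded_degree (C : graph_class) : Prop :=
  exists f dd : nat -> nat, forall (r : nat) (G : graph) (v : G), C G ->
    #|[set w in ball r v | dd r < deg w]| <= f r.

(* If T_{2,m} is an r-shallow topological minor of G, the m children of the root
   are sent to m distinct vertices of degree at least m, all within distance r+1
   of the image of the root; for m above both d(r+1) and f(r+1) this contradicts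
   locally almost bounded degree.
   Conversely, let M be the bound given by tree rank 2 for radius r. If N_r(v)
   holds more than 1 + M + ... + M^r vertices of degree above 1 + M(r+1) + M^2,
   then the breadth-first-search tree from v, pruned to the ancestors of these
   vertices, has depth at most r, so some vertex x has more than M children in
   it. Descending from M of them to high-degree vertices s_1, ..., s_M gives
   paths from x with at most r internal vertices meeting only at x. These paths
   cover at most 1 + M(r+1) vertices, so each s_i still has M^2 neighbours off
   them, and M private leaves can be chosen greedily for every s_i: this is an
   r-shallow topological minor T_{2,M}. *)

From mathcomp Require Import all_boot zify.
From Stdlib Require Import ClassicalEpsilon.
Set Implicit Arguments. Unset Strict Implicit. Unset Printing Implicit Defensive.

Lemma distinct_representatives (K : eqType) (T : finType) (t0 : T) (N : K -> {set T})
    (ks : seq K) : (forall k, k \in ks -> size ks <= #|N k|) ->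
  exists g : K -> T, {in ks &, injective g} /\ {in ks, forall k, g k \in N k}.
Proof.
elim: ks => [|k ks IHks] big_N; first by exists (fun=> t0).
have [|g [g_inj g_N]] := IHks.
  by move=> j jks; apply: leq_trans (big_N j _); rewrite ?inE ?jks ?orbT.
have /card_gt0P[z] : 0 < #|N k :\: [set z in map g ks]|.
  rewrite cardsD subn_gt0; apply: leq_trans (big_N k (mem_head _ _)).
  apply: leq_ltn_trans (subset_leq_card (subsetIr _ _)) _.
  by rewrite cardsE /= ltnS (leq_trans (card_size _)) ?size_map.
rewrite !inE => /andP[z_new zN].
exists (fun j => if j == k then z else g j); split=> [j j'|j]; rewrite !inE; last first.
  by case: eqP => [-> | _ /= /g_N].
case: (eqVneq j k) => [->|nkj]; case: (eqVneq j' k) => [->|nkj'] //=.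
- by move=> _ j'ks eq_z; case/negP: z_new; rewrite eq_z map_f.
- by move=> jks _ eq_z; case/negP: z_new; rewrite -eq_z map_f.
- exact: g_inj.
Qed.

Section Balls.
Variable G : graph.
Implicit Types (u v w : G) (k n : nat).

Lemma sub_ball k n v : k <= n -> ball k v \subset ball n v.
Proof.
elim: n => [|n IHn]; first by rewrite leqn0 => /eqP ->.
rewrite leq_eqVlt => /orP[/eqP -> // | /IHn sub_kn].
exact: subset_trans sub_kn (subsetUl _ _).
Qed.

Lemma ball_adj k v u w : u \in ball k v -> gadj u w -> w \in ball k.+1 v.
Proof. by move=> uk uw; rewrite !inE; apply/orP; right; apply/existsP; exists u; rewrite uk. Qed.

Lemma ballS_adj k v w : w \in ball k.+1 v -> w \notin ball k v ->
  exists2 u, u \in ball k v & gadj u w.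
Proof. by rewrite !inE => /orP[-> // | /existsP[u /andP[]]]; exists u. Qed.

Lemma last_path_ball v s : path (@gadj G) v s -> last v s \in ball (size s) v.
Proof.
elim/last_ind: s => [|s w IHs]; first by rewrite inE.
by rewrite rcons_path last_rcons size_rcons => /andP[/IHs]; apply: ball_adj.
Qed.

End Balls.

Lemma path_rev_rcons (G : graph) (x y : G) p :
  path (@gadj G) x (rcons p y) -> path (@gadj G) y (rcons (rev p) x).
Proof.
have sym_adj : (fun z w : G => gadj w z) =2 (@gadj G) by move=> z w; rewrite gadj_sym.
rewrite -rev_cons -(belast_rcons x p y) -{2}(last_rcons x p y) rev_path.
by rewrite (eq_path sym_adj).
Qed.

Section Tree2.
Variable m : nat.
Implicit Types (u t : tree 2 m) (a b : 'I_m).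

Definition word u : seq 'I_m := val (tagged u).

Lemma size_word u : size (word u) = tag u.
Proof. exact: size_tuple. Qed.

Lemma word_inj : injective word.
Proof.
case=> [k s] [k' s'] eq_w.
have eq_k : k = k'.
  by apply: val_inj; rewrite /= -(size_tuple s) -(size_tuple s'); congr size.
by subst k'; congr existT; apply: val_inj.
Qed.

Definition tree_node (s : seq 'I_m) (s_le2 : size s < 3) : tree 2 m :=
  existT (fun k : 'I_3 => k.-tuple 'I_m) (Ordinal s_le2) (in_tuple s).

Definition tree_root := tree_node (s:=[::]) isT.
Definition tree_kid a := tree_node (s:=[:: a]) isT.
Definition tree_leaf a b := tree_node (s:=[:: a; b]) isT.

Variant tree2_spec : tree 2 m -> Type :=
  | TreeRoot : tree2_spec tree_root
  | TreeKid a : tree2_spec (tree_kid a)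
  | TreeLeaf a b : tree2_spec (tree_leaf a b).

Lemma tree2P u : tree2_spec u.
Proof.
have : size (word u) < 3 by rewrite size_word.
case def_w: (word u) => [|a [|b []]] // _.
- by rewrite (_ : u = tree_root); [constructor | exact: word_inj].
- by rewrite (_ : u = tree_kid a); [constructor | exact: word_inj].
- by rewrite (_ : u = tree_leaf a b); [constructor | exact: word_inj].
Qed.

Lemma tree_kid_inj : injective tree_kid.
Proof. by move=> a a' /(congr1 word) []. Qed.

Lemma tree_leaf_inj a : injective (tree_leaf a).
Proof. by move=> b b' /(congr1 word) []. Qed.

Lemma adj_root_kid a : gadj tree_root (tree_kid a).
Proof. by rewrite /= /tadj /tchild /=. Qed.

Lemma adj_kid_leaf a b : gadj (tree_kid a) (tree_leaf a b).
Proof. by rewrite /= /tadj /tchild /= !eqxx. Qed.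

Variant tree2_edge : tree 2 m -> tree 2 m -> Prop :=
  | EdgeRootKid a : tree2_edge tree_root (tree_kid a)
  | EdgeKidRoot a : tree2_edge (tree_kid a) tree_root
  | EdgeKidLeaf a b : tree2_edge (tree_kid a) (tree_leaf a b)
  | EdgeLeafKid a b : tree2_edge (tree_leaf a b) (tree_kid a).

Lemma tree2_edgeP u t : gadj u t -> tree2_edge u t.
Proof.
rewrite /= /tadj /tchild.
case: (tree2P u) => [|a|a b]; case: (tree2P t) => [|a'|a' b'] //=;
  rewrite ?orbF //=; by [constructor | move=> /eqP[->]; constructor].
Qed.

Lemma tree_kid_deg a : m <= deg (tree_kid a).
Proof.
rewrite -[X in X <= _]card_ord -(card_imset _ (@tree_leaf_inj a)).
by apply/subset_leq_card/subsetP => _ /imsetP[b _ ->]; rewrite inE adj_kid_leaf.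
Qed.

End Tree2.

Section TopMinorModel.
Variables (r : nat) (H G : graph) (f : H -> G) (p : H -> H -> seq G).
Hypothesis f_inj : injective f.
Hypothesis p_edge : forall u v, gadj u v ->
  [/\ path (@gadj G) (f u) (rcons (p u v) (f v)), uniq (p u v), size (p u v) <= r &
      forall x, x \in p u v -> x \notin codom f].
Hypothesis p_disj : forall u v u' v', gadj u v -> gadj u' v' ->
  [set u; v] != [set u'; v'] -> forall x, x \in p u v -> x \notin p u' v'.

Lemma model_ball u v : gadj u v -> f v \in ball r.+1 (f u).
Proof.
case/p_edge=> /last_path_ball + _ size_p _; rewrite last_rcons size_rcons.
exact/subsetP/sub_ball.
Qed.

Lemma model_deg u : deg u <= deg (f u).
Proof.
pose first w := head (f w) (p u w).
have first_inj : {in [set w | gadj u w] &, injective first}.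
  move=> w w'; rewrite !inE => uw uw' eq_first; apply/eqP/negPn/negP => neq_ww'.
  have neq_edges : [set u; w] != [set u; w'].
    apply: contra neq_ww' => /eqP/setP/(_ w); rewrite !inE eqxx orbT.
    by case/esym/orP=> /eqP eq_w //; rewrite eq_w gadj_irr in uw.
  have [_ _ _ p_out] := p_edge uw; have [_ _ _ p_out'] := p_edge uw'.
  move: eq_first (p_disj uw uw' neq_edges) p_out p_out'; rewrite /first.
  case: (p u w) => [|z s]; case: (p u w') => [|z' s'] /=.
  - by move/f_inj/eqP; rewrite (negbTE neq_ww').
  - by move=> <- _ _ /(_ _ (mem_head _ _)); rewrite codom_f.
  - by move=> -> _ /(_ _ (mem_head _ _)); rewrite codom_f.
  - by move=> <- /(_ _ (mem_head _ _)); rewrite mem_head.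
rewrite /deg -(card_in_imset first_inj).
apply/subset_leq_card/subsetP => _ /imsetP[w + ->]; rewrite !inE => uw.
by case/p_edge: uw; rewrite headI => /andP[].
Qed.

End TopMinorModel.

Lemma shallow_topminor_embedding r (H G : graph) : shallow_topminor r H G ->
  exists f : H -> G, [/\ injective f,
    forall u v, gadj u v -> f v \in ball r.+1 (f u) & forall u, deg u <= deg (f u)].
Proof.
move=> [f [p [f_inj [p_edge p_disj]]]].
exists f; split=> //; first exact: model_ball p_edge.
exact: model_deg f_inj p_edge p_disj.
Qed.

Lemma tree_rank_le2_of_almost_bounded (C : graph_class) :
  locally_almost_bounded_degree C -> tree_rank_le C 2.
Proof.
move=> [few [dd few_high]] r; set m := (maxn (dd r.+1) (few r.+1)).+1.
exists m => G CG /shallow_topminor_embedding[f [f_inj f_ball f_deg]].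
have kids_high : [set f (tree_kid a) | a : 'I_m] \subset
    [set w in ball r.+1 (f (tree_root m)) | dd r.+1 < deg w].
  apply/subsetP => _ /imsetP[a _ ->]; rewrite inE f_ball ?adj_root_kid //=.
  by apply: leq_trans (leq_trans (tree_kid_deg a) (f_deg _)); rewrite ltnS leq_maxl.
have := leq_trans (subset_leq_card kids_high) (few_high r.+1 G _ CG).
rewrite card_imset ?card_ord; last exact: inj_comp f_inj (@tree_kid_inj m).
by rewrite leqNgt ltnS leq_maxr.
Qed.

Definition fan (T : eqType) (e : rel T) (r : nat) (x : T) (m : nat)
    (s : 'I_m -> T) (q : 'I_m -> seq T) :=
  (forall a, [/\ path e x (rcons (q a) (s a)), uniq (x :: rcons (q a) (s a)) & size (q a) <= r])
  /\ forall a b z, z \in rcons (q a) (s a) -> z \in rcons (q b) (s b) -> a = b.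

Section ParentMap.
Variables (T : finType) (e : rel T) (par : T -> T) (lev : T -> nat) (r : nat) (D : {set T}).
Hypothesis par_in : {in D, forall u, 0 < lev u -> par u \in D}.
Hypothesis lev_par : {in D, forall u, 0 < lev u -> lev (par u) = (lev u).-1}.
Hypothesis e_par : {in D, forall u, 0 < lev u -> e (par u) u}.
Hypothesis lev_le : {in D, forall u, lev u <= r}.
Hypothesis lev0_eq : {in D &, forall u w, lev u = 0 -> lev w = 0 -> u = w}.

Lemma iter_par n u : u \in D -> n <= lev u ->
  iter n par u \in D /\ lev (iter n par u) = lev u - n.
Proof.
move=> uD; elim: n => [|n IHn] n_le; first by rewrite subn0.
have [itD lev_it] := IHn (ltnW n_le).
have lev_pos : 0 < lev (iter n par u) by rewrite lev_it subn_gt0.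
by rewrite iterS par_in // lev_par // lev_it; split => //; lia.
Qed.

Definition anc k u := iter (lev u - k) par u.

Lemma anc_iter k i u : u \in D -> i + k <= lev u -> anc k (iter i par u) = anc k u.
Proof.
move=> uD le_ik; have [_ lev_it] := iter_par uD (leq_trans (leq_addr k i) le_ik).
by rewrite /anc lev_it -iterD; congr iter; lia.
Qed.

Definition ancestor u s := (lev u <= lev s) && (anc (lev u) s == u).

Fixpoint trail n u := if n is n'.+1 then iter n par u :: trail n' u else [::].

Lemma size_trail n u : size (trail n u) = n.
Proof. by elim: n => //= n ->. Qed.

Lemma mem_rcons_trail n u z : z \in rcons (trail n u) u -> exists2 i, i <= n & z = iter i par u.
Proof.
elim: n => [|n IHn]; rewrite /= !inE; first by move=> /eqP ->; exists 0.
by case/orP=> [/eqP ->|/IHn[i le_in ->]]; [exists n.+1 | exists i; first exact: leqW].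
Qed.

Lemma trail_path n u : u \in D -> n < lev u -> path e (iter n.+1 par u) (rcons (trail n u) u).
Proof.
move=> uD; elim: n => [|n IHn] lt_nu /=.
  by rewrite e_par.
have [itD lev_it] := iter_par uD (ltnW lt_nu).
by rewrite -!iterS [iter n.+2 _ _]iterS e_par ?lev_it ?subn_gt0 // IHn // ltnW.
Qed.

Lemma trail_uniq n u : u \in D -> n < lev u -> uniq (iter n.+1 par u :: rcons (trail n u) u).
Proof.
move=> uD; elim: n => [|n IHn] lt_nu.
  have [_ lev_pu] := iter_par uD lt_nu.
  by rewrite /= inE andbT; apply/eqP => /(congr1 lev); rewrite lev_pu; lia.
rewrite cons_uniq [uniq _](IHn (ltnW lt_nu)) andbT; apply/negP => /mem_rcons_trail[i le_in eq_it].
have [_ lev_top] := iter_par uD lt_nu.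
have [_ lev_i] := iter_par uD (leq_trans le_in (ltnW lt_nu)).
by move: lev_top; rewrite eq_it lev_i; lia.
Qed.

Lemma ancestor_trail y s : s \in D -> 0 < lev y -> ancestor y s ->
  let q := trail (lev s - lev y) s in
  [/\ path e (par y) (rcons q s), uniq (par y :: rcons q s), size q < lev s
    & {in rcons q s, forall z, anc (lev y) z = y}].
Proof.
move=> sD lev_pos /andP[le_ys /eqP anc_s] q.
have lt_ns : lev s - lev y < lev s by lia.
have <- : iter (lev s - lev y).+1 par s = par y by rewrite iterS -/(anc (lev y) s) anc_s.
rewrite trail_path // trail_uniq // size_trail; split => // z /mem_rcons_trail[i le_i ->].
by rewrite anc_iter //; lia.
Qed.

Variable S : {set T}.
Hypothesis S_D : S \subset D.

Definition hull := [set u | [exists s in S, ancestor u s]].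
Definition children x := [set y in hull | (0 < lev y) && (par y == x)].

Lemma mem_children x y : (y \in children x) = [&& y \in hull, 0 < lev y & par y == x].
Proof. by rewrite /children in_set. Qed.

Lemma S_hull : {subset S <= hull}.
Proof.
move=> s sS; rewrite inE; apply/existsP; exists s.
by rewrite sS /ancestor leqnn /anc subnn eqxx.
Qed.

Lemma hull_D : {subset hull <= D}.
Proof.
move=> u; rewrite inE => /existsP[s /andP[/(subsetP S_D) sD /andP[le_us /eqP <-]]].
by have [] := iter_par sD (leq_subr (lev u) (lev s)).
Qed.

Lemma par_hull u : u \in hull -> 0 < lev u -> par u \in hull.
Proof.
move=> uH lev_pos; have lev_pu := lev_par (hull_D uH) lev_pos.
move: uH; rewrite !inE => /existsP[s /andP[sS /andP[le_us /eqP anc_s]]].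
apply/existsP; exists s; rewrite sS /ancestor lev_pu /anc.
have -> : lev s - (lev u).-1 = (lev s - lev u).+1 by lia.
by rewrite iterS -/(anc _ s) anc_s eqxx; lia.
Qed.

Section BoundedBranching.
Variable m : nat.
Hypothesis children_le : {in hull, forall x, #|children x| <= m}.

Definition layer k := [set u in hull | lev u == k].

Lemma mem_layer k u : (u \in layer k) = (u \in hull) && (lev u == k).
Proof. by rewrite /layer in_set. Qed.

Lemma card_layer k : #|layer k| <= m ^ k.
Proof.
elim: k => [|k IHk].
  apply/card_le1_eqP => u w; rewrite !mem_layer.
  by move=> /andP[/hull_D uD /eqP u0] /andP[/hull_D wD /eqP w0]; apply: lev0_eq.
rewrite -sum1_card (partition_big par (fun x => x \in layer k)) => [|y]; last first.
  rewrite !mem_layer => /andP[yH /eqP lev_y].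
  by rewrite par_hull ?lev_y // lev_par ?lev_y ?(hull_D yH) /=.
rewrite expnSr; apply: (@leq_trans (\sum_(x in layer k) m)); last first.
  by rewrite sum_nat_const leq_mul2r IHk orbT.
apply: leq_sum => x; rewrite mem_layer sum1dep_card => /andP[xH _].
apply: leq_trans (children_le xH); apply/subset_leq_card/subsetP => y.
by rewrite in_set mem_children mem_layer => /andP[/andP[-> /eqP ->] ->].
Qed.

Lemma card_hull : #|hull| <= \sum_(k < r.+1) m ^ k.
Proof.
rewrite -sum1_card (partition_big (fun u => inord (lev u) : 'I_r.+1) predT) //.
apply: leq_sum => k _; apply: leq_trans (card_layer k); rewrite sum1dep_card.
apply/subset_leq_card/subsetP => u; rewrite in_set mem_layer => /andP[uH /eqP <-].
by rewrite uH inordK ?eqxx // ltnS lev_le // hull_D.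
Qed.

End BoundedBranching.

Lemma many_children m : \sum_(k < r.+1) m ^ k < #|S| ->
  exists2 x, x \in hull & m < #|children x|.
Proof.
move=> big_S; have [/exists_inP // | /exists_inPn few_children] :=
  boolP [exists x in hull, m < #|children x|].
suff : #|S| <= \sum_(k < r.+1) m ^ k by rewrite leqNgt big_S.
apply: (@leq_trans #|hull|); first by apply/subset_leq_card/subsetP; apply: S_hull.
apply: card_hull => x xH; rewrite leqNgt; exact: few_children.
Qed.

Lemma hull_fan m : \sum_(k < r.+1) m ^ k < #|S| ->
  exists x (s : 'I_m -> T) (q : 'I_m -> seq T), fan e r x s q /\ forall a, s a \in S.
Proof.
move=> /many_children[x _ /ltnW le_m].
pose y a := enum_val (widen_ord le_m a).
have y_inj : injective y by move=> a b /enum_val_inj [/val_inj].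
have y_kid a : [&& y a \in hull, 0 < lev (y a) & par (y a) == x].
  by rewrite -mem_children enum_valP.
have y_pos a : 0 < lev (y a) by case/and3P: (y_kid a).
have y_lev a : lev (y a) = (lev x).+1.
  by case/and3P: (y_kid a) => /hull_D yD pos /eqP <-; rewrite lev_par // prednK.
have desc a : exists2 s, s \in S & ancestor (y a) s.
  by case/and3P: (y_kid a); rewrite inE => /exists_inP.
have [s sS y_s] := fin_all_exists2 desc.
have s_trail a := ancestor_trail (subsetP S_D _ (sS a)) (y_pos a) (y_s a).
exists x, s, (fun a => trail (lev (s a) - lev (y a)) (s a)); split=> //; split=> [a|a b z].
  case: (s_trail a); case/and3P: (y_kid a) => _ _ /eqP -> p_a u_a size_a _; split=> //.
  exact: leq_trans (ltnW size_a) (lev_le (subsetP S_D _ (sS a))).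
have [_ _ _ top_a] := s_trail a; have [_ _ _ top_b] := s_trail b.
by move=> /top_a za /top_b; rewrite !y_lev in za *; rewrite za => /y_inj.
Qed.

End ParentMap.

Section FanTopMinor.
Variables (G : graph) (r m : nat) (x : G) (s : 'I_m -> G) (q : 'I_m -> seq G).
Hypothesis x_fan : fan (@gadj G) r x s q.

Definition fan_support := x |: \bigcup_(a < m) [set z in rcons (q a) (s a)].

Lemma card_fan_support : #|fan_support| <= 1 + m * r.+1.
Proof.
rewrite cardsU1; apply: leq_add (leq_b1 _) _.
apply: (@leq_trans (\sum_(a < m) #|[set z in rcons (q a) (s a)]|)).
  elim/big_rec2: _ => [|a n B _ IH]; first by rewrite cards0.
  by apply: leq_trans (leq_card_setU _ _).1 _; rewrite leq_add2l.
rewrite -[m in m * _]card_ord -sum_nat_const; apply: leq_sum => a _.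
have [_ _ size_q] := x_fan.1 a.
by rewrite cardsE (leq_trans (card_size _)) // size_rcons.
Qed.

Lemma fan_leaves : (forall a, 1 + m * r.+1 + m * m <= deg (s a)) ->
  exists g : 'I_m * 'I_m -> G,
    injective g /\ forall a b, gadj (s a) (g (a, b)) && (g (a, b) \notin fan_support).
Proof.
move=> s_deg.
have N_big a : m * m <= #|[set z | gadj (s a) z] :\: fan_support|.
  have := subset_leq_card (subsetIr [set z | gadj (s a) z] fan_support).
  rewrite cardsD -/(deg (s a)); have := s_deg a; have := card_fan_support; lia.
pose N (ab : 'I_m * 'I_m) := [set z | gadj (s ab.1) z] :\: fan_support.
have [|g [g_inj g_N]] := @distinct_representatives _ _ x N (enum {: 'I_m * 'I_m}).
  by move=> [a b] _; rewrite -cardE card_prod card_ord; apply: N_big.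
exists g; split=> [ab ab' | a b]; first by apply: g_inj; rewrite mem_enum.
by have := g_N (a, b); rewrite mem_enum !inE andbC => ->.
Qed.

Section Branches.
Variable g : 'I_m * 'I_m -> G.
Hypothesis g_inj : injective g.
Hypothesis g_leaf : forall a b, gadj (s a) (g (a, b)) && (g (a, b) \notin fan_support).

Definition fan_branch (u : tree 2 m) : G :=
  match word u with [::] => x | [:: a] => s a | a :: b :: _ => g (a, b) end.

Definition fan_route (u t : tree 2 m) : seq G :=
  match word u, word t with
  | [::], [:: a] => q a
  | [:: a], [::] => rev (q a)
  | _, _ => [::]
  end.

Lemma mem_fan_support a z : z \in rcons (q a) (s a) -> z \in fan_support.
Proof.
by move=> za; rewrite in_setU1; apply/orP; right; apply/bigcupP; exists a; rewrite ?inE.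
Qed.

Lemma x_notin_fan a : x \notin rcons (q a) (s a).
Proof. by have [_ + _] := x_fan.1 a; rewrite cons_uniq => /andP[]. Qed.

Lemma s_notin_route a : s a \notin q a.
Proof. by have [_ + _] := x_fan.1 a; rewrite cons_uniq rcons_uniq => /and3P[]. Qed.

Lemma s_inj : injective s.
Proof.
move=> a b eq_s; have [_ disj] := x_fan; apply: (disj a b (s a)).
  by rewrite mem_rcons mem_head.
by rewrite eq_s mem_rcons mem_head.
Qed.

Lemma fan_branch_inj : injective fan_branch.
Proof.
have x_s a : x != s a by apply: contraNneq (x_notin_fan a) => ->; rewrite mem_rcons mem_head.
have g_out a b : g (a, b) \notin fan_support by case/andP: (g_leaf a b).
have x_g ab : x != g ab.
  by case: ab => a b; apply: contraNneq (g_out a b) => <-; rewrite setU11.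
have s_g a ab : s a != g ab.
  case: ab => a' b; apply: contraNneq (g_out a' b) => <-.
  by apply: (mem_fan_support (a:=a)); rewrite mem_rcons mem_head.
move=> u u'; case: (tree2P u) => [|a|a b]; case: (tree2P u') => [|a'|a' b'] //=;
  rewrite /fan_branch /= => eq_f.
- by move: (x_s a'); rewrite eq_f eqxx.
- by move: (x_g (a', b')); rewrite eq_f eqxx.
- by move: (x_s a); rewrite eq_f eqxx.
- by rewrite (s_inj eq_f).
- by move: (s_g a (a', b')); rewrite eq_f eqxx.
- by move: (x_g (a, b)); rewrite eq_f eqxx.
- by move: (s_g a' (a, b)); rewrite eq_f eqxx.
- by case: (g_inj eq_f) => -> ->.
Qed.

Lemma route_notin_branch a z : z \in q a -> z \notin codom fan_branch.
Proof.
move=> za; have za' : z \in rcons (q a) (s a) by rewrite mem_rcons inE za orbT.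
apply/codomP => -[u]; case: (tree2P u) => [|a'|a' b']; rewrite /fan_branch /= => eq_z.
- by move: (x_notin_fan a); rewrite -eq_z za'.
- have [_ disj] := x_fan.
  have eq_a : a = a' by apply: (disj a a' z za'); rewrite eq_z mem_rcons mem_head.
  by move: (s_notin_route a); rewrite {1}eq_a -eq_z za.
- by case/andP: (g_leaf a' b') => _; rewrite -eq_z (mem_fan_support za').
Qed.

Lemma route_edge u t : gadj u t ->
  [/\ path (@gadj G) (fan_branch u) (rcons (fan_route u t) (fan_branch t)),
      uniq (fan_route u t), size (fan_route u t) <= r &
      forall z, z \in fan_route u t -> z \notin codom fan_branch].
Proof.
case/tree2_edgeP => [a|a|a b|a b]; rewrite /fan_route /fan_branch /=.
- have [pth + size_q] := x_fan.1 a; rewrite cons_uniq rcons_uniq => /and3P[_ _ uq].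
  by split=> // z; apply: route_notin_branch.
- have [/path_rev_rcons pth + size_q] := x_fan.1 a.
  rewrite cons_uniq rcons_uniq rev_uniq size_rev => /and3P[_ _ uq].
  by split=> // z; rewrite mem_rev; apply: route_notin_branch.
- by rewrite andbT; case/andP: (g_leaf a b).
- by rewrite andbT gadj_sym; case/andP: (g_leaf a b).
Qed.

Lemma mem_route u t z : gadj u t -> z \in fan_route u t ->
  exists a, z \in q a /\ [set u; t] = [set tree_root m; tree_kid a].
Proof.
by case/tree2_edgeP => [a|a|a b|a b]; rewrite /fan_route //= ?mem_rev => za;
  exists a; rewrite // setUC.
Qed.

Lemma fan_route_disjoint u t u' t' : gadj u t -> gadj u' t' ->
  [set u; t] != [set u'; t'] -> forall z, z \in fan_route u t -> z \notin fan_route u' t'.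
Proof.
move=> ut ut' neq_ut z /(mem_route ut)[a [za eq_ut]].
apply/negP => /(mem_route ut')[b [zb eq_ut']]; have [_ disj] := x_fan.
have eq_ab : a = b by apply: (disj a b z); rewrite mem_rcons inE ?za ?zb orbT.
by move: neq_ut; rewrite eq_ut eq_ut' eq_ab eqxx.
Qed.

End Branches.

Lemma fan_topminor : (forall a, 1 + m * r.+1 + m * m <= deg (s a)) ->
  shallow_topminor r (tree 2 m) G.
Proof.
move=> /fan_leaves[g [g_inj g_leaf]]; exists (fan_branch g), fan_route.
split; first exact: fan_branch_inj.
by split; [exact: route_edge | exact: fan_route_disjoint].
Qed.

End FanTopMinor.

Section BFS.
Variables (G : graph) (v : G) (r : nat).

Definition bfs_lev (u : G) := find (fun k => u \in ball k v) (iota 0 r.+1).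

Definition bfs_par (u : G) : G :=
  if bfs_lev u is k.+1 then odflt u [pick w | (w \in ball k v) && gadj w u] else u.

Lemma bfs_levP u : u \in ball r v -> forall k, (u \in ball k v) = (bfs_lev u <= k).
Proof.
move=> ur; have has_k : has (fun k => u \in ball k v) (iota 0 r.+1).
  by apply/hasP; exists r; rewrite // mem_iota add0n ltnSn.
have lev_r : bfs_lev u < r.+1 by rewrite -[r.+1](size_iota 0) -has_find.
move=> k; case: (leqP (bfs_lev u) k) => [le_lk | lt_kl].
  by apply: (subsetP (sub_ball _ le_lk)); have := nth_find 0 has_k; rewrite nth_iota.
by have := before_find 0 lt_kl; rewrite nth_iota ?add0n //; apply: ltn_trans lev_r.
Qed.

Lemma bfs_lev_le : {in ball r v, forall u, bfs_lev u <= r}.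
Proof. by move=> u ur; rewrite -bfs_levP. Qed.

Lemma bfs_lev0 : {in ball r v &, forall u w, bfs_lev u = 0 -> bfs_lev w = 0 -> u = w}.
Proof.
move=> u w ur wr u0 w0.
by have := bfs_levP ur 0; have := bfs_levP wr 0; rewrite u0 w0 !inE => /eqP -> /eqP ->.
Qed.

Lemma bfs_parP u : u \in ball r v -> 0 < bfs_lev u ->
  [/\ bfs_par u \in ball r v, gadj (bfs_par u) u & bfs_lev (bfs_par u) = (bfs_lev u).-1].
Proof.
move=> ur; rewrite /bfs_par; case def_l: (bfs_lev u) => [|k] // _.
have [w wk wu] : exists2 w, w \in ball k v & gadj w u.
  by apply: ballS_adj; rewrite bfs_levP // def_l ?ltnn.
case: pickP => [p /andP[pk pu] | /(_ w)]; last by rewrite wk wu.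
have le_kr : k <= r by have := bfs_lev_le ur; rewrite def_l => /ltnW.
have pr : p \in ball r v := subsetP (sub_ball v le_kr) _ pk.
split=> //; apply/eqP; rewrite eqn_leq -bfs_levP // pk /= -ltnS -def_l.
by rewrite -bfs_levP // (ball_adj _ pu) // bfs_levP.
Qed.

Lemma bfs_fan (S : {set G}) m : S \subset ball r v -> \sum_(k < r.+1) m ^ k < #|S| ->
  exists x s q, fan (@gadj G) r x s q /\ forall a : 'I_m, s a \in S.
Proof.
move=> S_ball; apply: (@hull_fan _ _ bfs_par bfs_lev r _ _ _ _ _ _ _ S_ball).
1-3: by move=> u ur /(bfs_parP ur)[].
- exact: bfs_lev_le.
- exact: bfs_lev0.
Qed.

End BFS.

Lemma almost_bounded_of_tree_rank_le2 (C : graph_class) :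
  tree_rank_le C 2 -> locally_almost_bounded_degree C.
Proof.
case/choice=> M noT.
exists (fun r => \sum_(k < r.+1) M r ^ k), (fun r => 1 + M r * r.+1 + M r * M r).
move=> r G v CG; set S := [set w in _ | _]; rewrite leqNgt; apply/negP.
have S_ball : S \subset ball r v by apply/subsetP => w; rewrite inE => /andP[].
case/(bfs_fan S_ball) => x [s [q [x_fan s_high]]].
apply: (noT r G CG (fan_topminor x_fan _)) => a.
by have := s_high a; rewrite inE => /andP[_ /ltnW].
Qed.

Theorem lemma5p2 (C : graph_class) :
  tree_rank_le C 2 <-> locally_almost_bounded_degree C.
Proof.
split; [exact: almost_bounded_of_tree_rank_le2 | exact: tree_rank_le2_of_almost_bounded].
Qed.
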